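(* The BBC algebra $\mathfrak{B}=(\Lambda,\Pi,\perp\!\!\!\perp)$ is a coherent realizability algebra. Concretely: for every stack $\pi$ and all $\xi\in\Lambda$, $\varpi\in\Pi$ one has $k_\pi\star\xi\cdot\varpi\succ\xi\star\pi$; and for every closed term $\theta$ (no occurrence of $p,q_0,\dots,q_N$) one has $\theta\star\pi_0\notin\perp\!\!\!\perp$.
   Context: Fix an integer $N\ge 0$. The set $\Lambda$ of terms is the smallest set containing the constants $B,C,I,K,W$ (Curry's combinators), $cc$ (Felleisen–Griffin instruction), $A$ (abort) and the ''variables'' $p,q_0,\dots,q_N$, closed under application $(\xi)\eta$ (also written $\xi\eta$; $(\dots((\xi_1)\xi_2)\dots)\xi_n$ is written $\xi_1\xi_2\dots\xi_n$), and such that to each sequence $(\xi_i)_{i\in\mathbb N}$ of closed terms (terms with no occurrence of $p,q_0,\dots,q_N$) is associated, injectively and in a well-founded way, a new constant $\bigwedge_i\xi_i$. A stack is a finite sequence $t_0\cdot\ldots\cdot t_{n-1}\cdot\pi_0$ of terms terminated by the symbol $\pi_0$ (the empty stack); $\Pi$ is the set of stacks. Processes are pairs $\xi\star\pi\in\Lambda\times\Pi$. For $t\in\Lambda$ let $\ell_t=((C)(B)CB)t$, and define the continuation $k_\pi$ by $k_{\pi_0}=A$, $k_{t\cdot\pi}=(\ell_t)k_\pi$. Let $\sigma=(BW)(C)(B)BB$, $\underline 0=(K)I$, $\underline{n+1}=(\sigma)\underline n$. Execution $\succ$ is the least preorder on $\Lambda\times\Pi$ such that for all $\xi,\eta,\zeta\in\Lambda,\pi\in\Pi,n\in\mathbb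 N$: $(\xi)\eta\star\pi\succ\xi\star\eta\cdot\pi$; $B\star\xi\cdot\eta\cdot\zeta\cdot\pi\succ\xi\star(\eta)\zeta\cdot\pi$; $C\star\xi\cdot\eta\cdot\zeta\cdot\pi\succ\xi\star\zeta\cdot\eta\cdot\pi$; $I\star\xi\cdot\pi\succ\xi\star\pi$; $K\star\xi\cdot\eta\cdot\pi\succ\xi\star\pi$; $W\star\xi\cdot\eta\cdot\pi\succ\xi\star\eta\cdot\eta\cdot\pi$; $cc\star\xi\cdot\pi\succ\xi\star k_\pi\cdot\pi$; $A\star\xi\cdot\pi\succ\xi\star\pi_0$; $\bigwedge_i\xi_i\star\underline n\cdot\pi\succ\xi_n\star\pi$. The pole is $\perp\!\!\!\perp=\{\xi\star\pi:\exists\varpi\in\Pi,\ \xi\star\pi\succ p\star\varpi\}$. The proof-like terms of this algebra are taken to be closed terms. A realizability algebra (in Krivine's sense) requires in particular that continuations satisfy $k_\pi\star\xi\cdot\varpi\succ\xi\star\pi$; it is coherent if for every proof-like term $\theta$ there is a stack $\pi$ with $\theta\star\pi\notin\perp\!\!\!\perp$. *)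

From Stdlib Require Import List Relations.
Import ListNotations.

(* Raw terms.  [Pv] is the variable p, [Qv n] is q_n (valid only for n <= N),
   [Conj f] is the constant /\_i (f i). *)
Inductive term : Type :=
| Bc | Cc | Ic | Kc | Wc | CC | Ac
| Pv
| Qv (n : nat)
| App (a b : term)
| Conj (f : nat -> term).

Fixpoint closed (t : term) : Prop :=
  match t with
  | Pv => False
  | Qv _ => False
  | App a b => closed a /\ closed b
  | Conj f => forall i, closed (f i)
  | _ => True
  end.

(* Membership in Lambda (for the fixed N): variables q_n only with n <= N,
   and /\_i xi_i only for sequences of closed terms of Lambda. *)
Fixpoint valid (N : nat) (t : term) : Prop :=
  match t with
  | Qv n => n <= N
  | App a b => valid N a /\ valid N b
  | Conj f => forall i, closed (f i) /\ valid N (f i)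
  | _ => True
  end.

(* Stacks: t_0 . ... . t_{n-1} . pi_0 is represented by the list [t_0;...;t_{n-1}]. *)
Definition stack := list term.
Definition valid_stack (N : nat) (pi : stack) : Prop := Forall (valid N) pi.
Definition process := (term * stack)%type.

Definition ell (t : term) : term := App (App Cc (App (App Bc Cc) Bc)) t.

Fixpoint kont (pi : stack) : term :=
  match pi with
  | [] => Ac
  | t :: pi' => App (ell t) (kont pi')
  end.

Definition sigma : term := App (App Bc Wc) (App Cc (App (App Bc Bc) Bc)).
Fixpoint numeral (n : nat) : term :=
  match n with
  | 0 => App Kc Ic
  | S m => App sigma (numeral m)
  end.

Inductive step (N : nat) : process -> process -> Prop :=
| st_push : forall x y pi, valid N x -> valid N y -> valid_stack N pi ->
    step N (App x y, pi) (x, y :: pi)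
| st_B : forall x y z pi, valid N x -> valid N y -> valid N z -> valid_stack N pi ->
    step N (Bc, x :: y :: z :: pi) (x, App y z :: pi)
| st_C : forall x y z pi, valid N x -> valid N y -> valid N z -> valid_stack N pi ->
    step N (Cc, x :: y :: z :: pi) (x, z :: y :: pi)
| st_I : forall x pi, valid N x -> valid_stack N pi ->
    step N (Ic, x :: pi) (x, pi)
| st_K : forall x y pi, valid N x -> valid N y -> valid_stack N pi ->
    step N (Kc, x :: y :: pi) (x, pi)
| st_W : forall x y pi, valid N x -> valid N y -> valid_stack N pi ->
    step N (Wc, x :: y :: pi) (x, y :: y :: pi)
| st_cc : forall x pi, valid N x -> valid_stack N pi ->
    step N (CC, x :: pi) (x, kont pi :: pi)
| st_A : forall x pi, valid N x -> valid_stack N pi ->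
    step N (Ac, x :: pi) (x, [])
| st_Conj : forall f n pi, valid N (Conj f) -> valid_stack N pi ->
    step N (Conj f, numeral n :: pi) (f n, pi).

Definition exec (N : nat) : process -> process -> Prop :=
  clos_refl_trans process (step N).

Definition pole (N : nat) (pr : process) : Prop :=
  exists varpi : stack, valid_stack N varpi /\ exec N pr (Pv, varpi).

(* Continuations: the combinators inside l_t = ((C)(B)CB)t turn
   l_t k_pi * xi . varpi into k_pi * (xi)t . varpi in ten steps, so by
   induction on pi, k_{t.pi} * xi . varpi >- (xi)t * pi >- xi * t . pi.
   Coherence: every execution rule only rearranges subterms of the process,
   adds combinators, or (for cc) adds a continuation built from the stack;
   hence execution preserves closedness, and a closed process never reaches
   the head p. *)
From Stdlib Require Import List Relations.
Import ListNotations.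

Ltac solve_valid :=
  unfold valid_stack in *; simpl; repeat (split || constructor); auto.

Ltac exec_step :=
  eapply rt_trans; [apply rt_step; econstructor; solve [solve_valid] | simpl].

Lemma valid_kont N pi : valid_stack N pi -> valid N (kont pi).
Proof. induction 1; simpl; repeat split; auto. Qed.

Lemma closed_kont pi : Forall closed pi -> closed (kont pi).
Proof. induction 1; simpl; repeat split; auto. Qed.

Lemma exec_ell N t k xi varpi :
  valid N t -> valid N k -> valid N xi -> valid_stack N varpi ->
  exec N (App (ell t) k, xi :: varpi) (k, App xi t :: varpi).
Proof.
  intros; unfold ell.
  do 10 exec_step.
  apply rt_refl.
Qed.

Lemma exec_kont N pi xi varpi :
  valid_stack N pi -> valid N xi -> valid_stack N varpi ->
  exec N (kont pi, xi :: varpi) (xi, pi).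
Proof.
  revert xi varpi; induction pi as [|t pi IH]; intros xi varpi Hpi Hxi Hvarpi.
  - apply rt_step; constructor; assumption.
  - inversion_clear Hpi as [|? ? Ht Hpi'].
    eapply rt_trans; [apply exec_ell; auto using valid_kont|].
    eapply rt_trans; [apply IH; solve_valid|].
    exec_step; apply rt_refl.
Qed.

Definition closed_process (pr : process) : Prop :=
  closed (fst pr) /\ Forall closed (snd pr).

Lemma step_closed N pr pr' : step N pr pr' -> closed_process pr -> closed_process pr'.
Proof.
  intros Hstep [Hhead Hstack]; destruct Hstep; simpl in *;
  repeat match goal with
  | H : Forall _ (_ :: _) |- _ => inversion_clear H
  | H : _ /\ _ |- _ => destruct H
  end;
  split; simpl; auto; repeat constructor; auto using closed_kont.
Qed.

Lemma exec_closed N pr pr' : exec N pr pr' -> closed_process pr -> closed_process pr'.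
Proof. induction 1; eauto using step_closed. Qed.

Lemma closed_process_not_pole N pr : closed_process pr -> ~ pole N pr.
Proof.
  intros Hpr [varpi [_ Hexec]].
  destruct (exec_closed _ _ _ Hexec Hpr) as [Hp _].
  exact Hp.
Qed.

Theorem lemma1 (N : nat) :
  (forall (pi : stack) (xi : term) (varpi : stack),
      valid_stack N pi -> valid N xi -> valid_stack N varpi ->
      exec N (kont pi, xi :: varpi) (xi, pi))
  /\
  (forall theta : term, valid N theta -> closed theta ->
      ~ pole N (theta, [])).
Proof.
  split.
  - exact (exec_kont N).
  - intros theta _ Htheta.
    apply closed_process_not_pole.
    split; simpl; auto.
Qed.
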